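(* Let $d\ge0$ and $n>d$ be integers, let $T=\{T_1,\dots,T_l\}\in L(n,d)$ with $T\neq\{\emptyset\}$, and let $m$ be a positive integer. Let $$M(m,T)=\Bigl\{(m_1,\dots,m_l)\in\mathbb{Z}_{>0}^l:\ m_i\ge\operatorname{codim}_d(T_i)\ \forall i;\ m_i=1\text{ whenever }\operatorname{codim}_d(T_i)=1;\ m=m_1+\cdots+m_l\Bigr\}.$$ Then $$\kappa_{n,d}(m,T)=\sum_{(m_1,\dots,m_l)\in M(m,T)}\ \prod_{i=1}^l\kappa_{n-|T_i|,\,d-|T_i|}(m_i,\{\emptyset\}).$$
   Context: For a finite set $X$ let $\operatorname{codim}_d(X)=d+1-|X|$. For a finite collection $\{T_1,\dots,T_l\}$ of pairwise distinct finite sets put $\rho_d(\{T_1,\dots,T_l\})=\sum_{i=1}^l\operatorname{codim}_d(T_i)$ (with $\rho_d(\emptyset)=0$) and $D_d(\{T_1,\dots,T_l\})=\operatorname{codim}_d(T_1\cap\cdots\cap T_l)-\rho_d(\{T_1,\dots,T_l\})$. For integers $d\ge0$, $n>d$, $L(n,d)$ is the set of all collections $T$ of subsets of $\{1,\dots,n\}$ such that (i) $D_d(T')>0$ for every $T'\subset T$ with $|T'|>1$, and (ii) $0\le|T_i|\le d$ for every $T_i\in T$. It is partially ordered by: $T<T'$ iff $\rho_d(T)<\rho_d(T')$ and for every $T_i\in T$ there exists $T'_j\in T'$ with $T'_j\subset T_i$; $T\le T'$ means $T<T'$ or $T=T'$. With this order $L(n,d)$ is a lattice ($\emptyset$ minimum,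 $\{\emptyset\}$ maximum); $\vee$ denotes its join. For $X\subset\{1,\dots,n\}$ with $|X|=d$, $\{X\}\in L(n,d)$ is called a hyperplane. For $T\in L(n,d)$ and a positive integer $m$, $\kappa_{n,d}(m,T)$ is the number of $m$-element sets $\{X_1,\dots,X_m\}$ of distinct $d$-element subsets of $\{1,\dots,n\}$ such that $\{X_1\}\vee\cdots\vee\{X_m\}=T$; by convention $\kappa_{n,0}(m,\{\emptyset\})=1$ for all $n,m$. *)

From mathcomp Require Import all_boot all_order all_algebra.
Set Implicit Arguments. Unset Strict Implicit. Unset Printing Implicit Defensive.
Import Order.TTheory GRing.Theory Num.Theory.
Local Open Scope ring_scope.

(* The ground set {1,...,n} is modelled by 'I_n; a collection of subsets is
   a {set {set 'I_n}}. *)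

Definition codim (n d : nat) (X : {set 'I_n}) : int := (d.+1)%:Z - (#|X|)%:Z.

Definition rho (n d : nat) (T : {set {set 'I_n}}) : int :=
  \sum_(X in T) codim d X.

Definition bigcapT (n : nat) (T : {set {set 'I_n}}) : {set 'I_n} :=
  \bigcap_(X in T) X.

Definition Dd (n d : nat) (T : {set {set 'I_n}}) : int :=
  codim d (bigcapT T) - rho d T.

Definition inL (n d : nat) (T : {set {set 'I_n}}) : bool :=
  [forall T' : {set {set 'I_n}},
      ((T' \subset T) && (1 < #|T'|)%N) ==> (0 < Dd d T')]
  && [forall X in T, (#|X| <= d)%N].

Definition ltL (n d : nat) (T T' : {set {set 'I_n}}) : bool :=
  (rho d T < rho d T') && [forall X in T, [exists Y in T', Y \subset X]].

Definition leL (n d : nat) (T T' : {set {set 'I_n}}) : bool :=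
  ltL d T T' || (T == T').

Definition is_join (n d : nat) (S : {set {set {set 'I_n}}})
    (T : {set {set 'I_n}}) : bool :=
  [&& inL d T,
      [forall U in S, leL d U T]
    & [forall U : {set {set 'I_n}},
         (inL d U && [forall V in S, leL d V U]) ==> leL d T U]].

(* kappa_{n,d}(m,T): number of m-element sets {X_1,...,X_m} of distinct
   d-element subsets with {X_1} v ... v {X_m} = T; with the convention
   kappa_{n,0}(m,{emptyset}) = 1. *)
Definition kappa (n d m : nat) (T : {set {set 'I_n}}) : nat :=
  if (d == 0%N) && (T == [set set0]) then 1%N
  else #|[set H : {set {set 'I_n}} |
            [&& #|H| == m, [forall X in H, #|X| == d]
              & is_join d [set [set X] | X in H] T]]|.

From mathcomp Require Import all_boot all_order all_algebra.
From mathcomp Require Import zify.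
Import Order.TTheory GRing.Theory Num.Theory.
Set Implicit Arguments. Unset Strict Implicit. Unset Printing Implicit Defensive.
Local Open Scope ring_scope.

(* For a family H of d-sets, the join of the hyperplanes {X}, X in H, is T
   exactly when every X in H contains a member T_i of T -- unique, by the
   defect condition -- and, for every i, the link {X \ T_i : X in H, T_i <= X}
   has join {emptyset} among families of subsets of the complement of T_i,
   with parameter d - |T_i|.  Both directions compare rho: merging subfamilies
   of nonpositive defect coarsens any family into L(n,d) without increasing
   rho, and rho is strictly monotone along refinement inside L(n,d).  Hence H
   splits into the independent pieces H_i = {X in H : T_i <= X}; deleting T_i
   and relabelling its complement, H_i becomes a family counted by
   kappa_{n-|T_i|,d-|T_i|}(|H_i|, {emptyset}), and the conditions defining
   M(m,T) are exactly those under which such pieces exist. *)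

(** * Refinement and rho *)

Definition refines n (T U : {set {set 'I_n}}) :=
  [forall X in T, [exists Y in U, Y \subset X]].

Section Refinement.
Variable n : nat.
Implicit Types (X Y : {set 'I_n}) (T U V : {set {set 'I_n}}).

Lemma refines_refl T : refines T T.
Proof. by apply/forall_inP=> X XT; apply/exists_inP; exists X. Qed.

Lemma refines_trans T U V : refines T U -> refines U V -> refines T V.
Proof.
move=> /forall_inP rTU /forall_inP rUV; apply/forall_inP=> X XT.
have /exists_inP[Y YU sYX] := rTU X XT.
have /exists_inP[Z ZV sZY] := rUV Y YU.
by apply/exists_inP; exists Z => //; apply: subset_trans sYX.
Qed.

Lemma refines_set1 X U : refines [set X] U = [exists Y in U, Y \subset X].
Proof.
apply/forall_inP/idP => [h|h Y]; first by apply: h; rewrite inE.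
by rewrite inE => /eqP ->.
Qed.

Lemma refines_imset1 T U :
  [forall V in [set [set X] | X in T], refines V U] = refines T U.
Proof.
apply/forall_inP/forall_inP => [h X XT|h V /imsetP[X XT ->]].
  by rewrite -refines_set1; apply: h; apply: imset_f.
by rewrite refines_set1; apply: h.
Qed.

End Refinement.

Section Rho.
Variables n d : nat.
Implicit Types (X Y : {set 'I_n}) (S T U V W : {set {set 'I_n}}).

Lemma codim_ge1 X : (#|X| <= d)%N -> 1 <= codim d X.
Proof. rewrite /codim => h; lia. Qed.

Lemma codim_subset X Y : Y \subset X -> codim d X <= codim d Y.
Proof. move=> /subset_leq_card h; rewrite /codim; lia. Qed.

Lemma rho_set1 X : rho d [set X] = codim d X.
Proof. exact: big_set1. Qed.

Lemma rho_setID S V : S \subset V -> rho d V = rho d S + rho d (V :\: S).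
Proof. by move=> sSV; rewrite /rho (big_setID S) /= (setIidPr sSV). Qed.

Lemma rho_subset S T :
  [forall X in T, (#|X| <= d)%N] -> S \subset T -> rho d S <= rho d T.
Proof.
move=> /forall_inP hT sST; rewrite (rho_setID sST) lerDl.
apply: sumr_ge0 => X; rewrite inE => /andP[_ XT].
exact: le_trans (codim_ge1 (hT X XT)).
Qed.

Lemma codim_le_rho X W :
  [forall Y in W, (#|Y| <= d)%N] -> X \in W -> codim d X <= rho d W.
Proof. by move=> hW XW; rewrite -rho_set1; apply: rho_subset; rewrite ?sub1set. Qed.

Lemma rho_setU S T :
  [forall X in T, (#|X| <= d)%N] -> rho d (S :|: T) <= rho d S + rho d T.
Proof.
move=> hT; rewrite (rho_setID (subsetUl S T)) lerD2l.
by apply: rho_subset hT _; apply/subsetP=> X; rewrite !inE => /andP[/negbTE ->].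
Qed.

End Rho.

Section LatticeMembers.
Variables n d : nat.
Implicit Types (X Y Z : {set 'I_n}) (S T U V W : {set {set 'I_n}}).

Lemma inL_cards T : inL d T -> [forall X in T, (#|X| <= d)%N].
Proof. by case/andP. Qed.

Lemma inL_card T X : inL d T -> X \in T -> (#|X| <= d)%N.
Proof. by move/inL_cards/forall_inP; apply. Qed.

Lemma inL_Dd T S : inL d T -> S \subset T -> (1 < #|S|)%N -> 0 < Dd d S.
Proof. by move=> /andP[/forallP h _] sST c; move: (h S); rewrite sST c. Qed.

Lemma inL_subset S T : inL d T -> S \subset T -> inL d S.
Proof.
move=> LT sST; apply/andP; split.
  apply/forallP=> S'; apply/implyP=> /andP[sS' c].
  exact: inL_Dd LT (subset_trans sS' sST) c.
by apply/forall_inP=> X XS; apply: inL_card LT (subsetP sST X XS).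
Qed.

Lemma inL_set1 X : (#|X| <= d)%N -> inL d [set X].
Proof.
move=> hX; apply/andP; split.
  apply/forallP=> S; apply/implyP=> /andP[/subset_leq_card + c].
  by rewrite cards1; lia.
by apply/forall_inP=> Y; rewrite inE => /eqP ->.
Qed.

Lemma inL_set0 : inL d (set0 : {set {set 'I_n}}).
Proof.
apply/andP; split; last by apply/forall_inP=> X; rewrite inE.
apply/forallP=> S; apply/implyP=> /andP[]; rewrite subset0 => /eqP ->.
by rewrite cards0.
Qed.

Lemma rho_le_d W : inL d W -> set0 \notin W -> rho d W <= d%:Z.
Proof.
move=> LW W0.
have [W1|W1] := leqP #|W| 1; last first.
  by have := inL_Dd LW (subxx W) W1; rewrite /Dd /codim; lia.
have [->|[X XW]] := set_0Vmem W; first by rewrite /rho big_set0.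
have -> : W = [set X] by apply/eqP; rewrite eq_sym eqEcard sub1set XW cards1.
have : X != set0 by apply: contraNneq W0 => <-.
by rewrite rho_set1 /codim -card_gt0; lia.
Qed.

Lemma rho_lt_codim T S Y :
  inL d T -> S \subset T -> (#|Y| <= d)%N -> (forall X, X \in S -> Y \subset X) ->
  S != [set Y] -> rho d S < codim d Y.
Proof.
move=> LT sST hY hS nSY.
have [S1|S1] := leqP #|S| 1; last first.
  have := inL_Dd LT sST S1; rewrite /Dd.
  have sYS : Y \subset bigcapT S by apply/bigcapsP.
  have := codim_subset d sYS; lia.
have [->|[X XS]] := set_0Vmem S.
  by rewrite /rho big_set0; apply: lt_le_trans (codim_ge1 hY).
have SX : S = [set X] by apply/eqP; rewrite eq_sym eqEcard sub1set XS cards1.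
have nXY : X != Y by apply: contraNneq nSY => <-; rewrite SX.
have := subset_leqif_cards (hS X XS); rewrite eq_sym (negbTE nXY) => -[h1 h2].
by rewrite SX rho_set1 /codim; lia.
Qed.

Lemma rho_le_codim T S Y :
  inL d T -> S \subset T -> (#|Y| <= d)%N -> (forall X, X \in S -> Y \subset X) ->
  rho d S <= codim d Y.
Proof.
move=> LT sST hY hS; have [->|nSY] := eqVneq S [set Y]; first by rewrite rho_set1.
exact/ltW/(rho_lt_codim LT).
Qed.

End LatticeMembers.

Section Monotonicity.
Variables n d : nat.
Implicit Types (X Y : {set 'I_n}) (T U : {set {set 'I_n}}).

Definition coarser_member U X : {set 'I_n} := odflt set0 [pick Y in U | Y \subset X].

Lemma coarser_memberP U X :
  [exists Y in U, Y \subset X] -> coarser_member U X \in U /\ coarser_member U X \subset X.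
Proof.
rewrite /coarser_member; case: pickP => [Y /andP[] //|none].
by case/exists_inP=> Y YU sYX; move: (none Y); rewrite YU sYX.
Qed.

Let fibre T U Y := [set X in T | coarser_member U X == Y].

Let fibre_subset T U Y : fibre T U Y \subset T.
Proof. by apply/subsetP=> X; rewrite inE => /andP[]. Qed.

Let fibre_above T U Y X : refines T U -> X \in fibre T U Y -> Y \subset X.
Proof.
move=> /forall_inP rTU; rewrite inE => /andP[XT /eqP <-].
by have [] := coarser_memberP (rTU X XT).
Qed.

Let rho_fibres T U : refines T U -> rho d T = \sum_(Y in U) rho d (fibre T U Y).
Proof.
move=> /forall_inP rTU; rewrite /rho (partition_big (coarser_member U) [in U]).
  by apply: eq_bigr => Y _; apply: eq_bigl => X; rewrite inE.
by move=> X XT; have [] := coarser_memberP (rTU X XT).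
Qed.

Lemma rho_refines T U :
  inL d T -> [forall Y in U, (#|Y| <= d)%N] -> refines T U -> rho d T <= rho d U.
Proof.
move=> LT /forall_inP hU rTU; rewrite (rho_fibres rTU) [leRHS]/rho.
apply: ler_sum => Y YU; apply: (rho_le_codim LT) (hU Y YU) _ => // X.
exact: fibre_above.
Qed.

Lemma rho_refines_lt T U :
  inL d T -> [forall Y in U, (#|Y| <= d)%N] -> refines T U -> T != U ->
  rho d T < rho d U.
Proof.
move=> LT /forall_inP hU rTU nTU.
have [Y0 Y0U nY0] : exists2 Y0, Y0 \in U & fibre T U Y0 != [set Y0].
  apply/exists_inP; apply: contraNT nTU => /exists_inPn fib1.
  have fibE Y : Y \in U -> fibre T U Y = [set Y] by move/fib1; rewrite negbK => /eqP.
  apply/eqP/setP=> X; apply/idP/idP => [XT|XU].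
    have [XU' _] := coarser_memberP (forall_inP rTU X XT).
    have : X \in fibre T U (coarser_member U X) by rewrite inE XT eqxx.
    by rewrite fibE // inE => /eqP ->.
  by apply: (subsetP (fibre_subset T U X)); rewrite fibE ?set11.
rewrite (rho_fibres rTU) [ltRHS]/rho (bigD1 Y0) //= [ltRHS](bigD1 Y0) //=.
apply: ltr_leD; first exact: rho_lt_codim LT _ (hU _ Y0U) (fun X => @fibre_above _ _ _ X rTU) nY0.
apply: ler_sum => Y /andP[YU _].
exact: rho_le_codim LT _ (hU _ YU) (fun X => @fibre_above _ _ _ X rTU).
Qed.

Lemma leL_refines T U : inL d T -> inL d U -> leL d T U = refines T U.
Proof.
move=> LT LU; rewrite /leL /ltL.
have [->|nTU] := eqVneq T U; first by rewrite orbT refines_refl.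
rewrite orbF; apply/andP/idP => [[] //|rTU]; split => //.
exact: rho_refines_lt LT (inL_cards LU) rTU nTU.
Qed.

End Monotonicity.

Section Coarsening.
Variables n d : nat.
Implicit Types (A X Y : {set 'I_n}) (S V : {set {set 'I_n}}).

Definition bounded_in A V := [forall Y in V, (#|Y| <= d)%N && (Y \subset A)].

Lemma merge_subfamily A V S :
  bounded_in A V -> S \subset V -> (1 < #|S|)%N -> Dd d S <= 0 ->
  let V1 := bigcapT S |: (V :\: S) in
  [/\ (#|V1| < #|V|)%N, bounded_in A V1, refines V V1 & rho d V1 <= rho d V].
Proof.
move=> /forall_inP bV sSV S1 DS V1; set c := bigcapT S.
have /set0Pn[X0 X0S] : S != set0 by rewrite -card_gt0 ltnW.
have cX X : X \in S -> c \subset X by move=> XS; apply: bigcap_inf.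
have /andP[hX0 sX0] := bV X0 (subsetP sSV _ X0S).
have hc : (#|c| <= d)%N by apply: leq_trans (subset_leq_card (cX _ X0S)) hX0.
split.
- have := cardsU1 c (V :\: S); rewrite cardsD (setIidPr sSV) /V1 => ->.
  have arith (a s b : nat) : (b <= 1 -> 1 < s -> s <= a -> b + (a - s) < a)%N by lia.
  by apply: arith (leq_b1 _) S1 (subset_leq_card sSV).
- apply/forall_inP=> Y; rewrite !inE => /orP[/eqP ->|/andP[_ /bV //]].
  by rewrite hc (subset_trans (cX _ X0S) sX0).
- apply/forall_inP=> X XV; apply/exists_inP.
  have [XS|XS] := boolP (X \in S); first by exists c; [rewrite !inE eqxx | exact: cX].
  by exists X; rewrite // !inE XS XV orbT.
have cod_c : codim d c <= rho d S by rewrite -subr_le0.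
rewrite (rho_setID d sSV) /V1 -/c setUC.
have hc1 : [forall Y in [set c], (#|Y| <= d)%N] by apply/forall_inP=> Y /set1P ->.
by apply: le_trans (rho_setU (V :\: S) hc1) _; rewrite rho_set1 addrC lerD2r.
Qed.

Lemma lattice_coarsening A V :
  bounded_in A V ->
  exists V', [/\ inL d V', bounded_in A V', refines V V' & rho d V' <= rho d V].
Proof.
have [k] := ubnP #|V|; elim: k V => // k IH V /ltnSE Vk bV.
have [LV|] := boolP (inL d V); first by exists V; rewrite refines_refl.
have sizes : [forall X in V, (#|X| <= d)%N].
  by apply/forall_inP=> X /(forall_inP bV) /andP[].
rewrite /inL sizes andbT => /forallPn[S]; rewrite negb_imply -leNgt => /andP[/andP[sSV S1] DS].
have [V1k bV1 rVV1 rhoV1] := merge_subfamily bV sSV S1 DS.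
have [V' [LV' bV' rV1V' rhoV']] := IH _ (leq_trans V1k Vk) bV1.
by exists V'; split => //; [apply: refines_trans rV1V' | apply: le_trans rhoV1].
Qed.

End Coarsening.

(** * Links *)

Lemma card_bigcup_leq_sum (I T : finType) (P : {pred I}) (F : I -> {set T}) :
  (#|\bigcup_(i in P) F i| <= \sum_(i in P) #|F i|)%N.
Proof.
elim/big_rec2: _ => [|i k X _ IH]; first by rewrite cards0.
by apply: leq_trans (leq_card_setU (F i) X).1 _; rewrite leq_add2l.
Qed.

Section Link.
Variables (n d : nat) (Z : {set 'I_n}).
Hypothesis Zd : (#|Z| <= d)%N.
Implicit Types (X Y : {set 'I_n}) (S U : {set {set 'I_n}}).

Lemma codim_setD Y : codim (d - #|Z|) (Y :\: Z) = codim d Y - (#|Z :\: Y|)%:Z.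
Proof.
have := cardsID Z Y; have := cardsID Y Z; rewrite setIC /codim; lia.
Qed.

Lemma bigcapT_setD S : S != set0 -> \bigcap_(Y in S) (Y :\: Z) = bigcapT S :\: Z.
Proof.
case/set0Pn=> Y0 Y0S; apply/setP=> x; rewrite inE.
apply/bigcapP/andP => [h|[xZ /bigcapP h] Y YS]; last by rewrite inE xZ h.
split; first by have := h _ Y0S; rewrite inE => /andP[].
by apply/bigcapP=> Y YS; have := h _ YS; rewrite inE => /andP[].
Qed.

(* Removing [Z] lowers the codimension of each member [Y] by [|Z \ Y|] and that
   of the intersection by [|Z \ bigcapT S|], which is at most their sum. *)
Lemma Dd_le_setD S :
  S != set0 -> {in S &, injective (fun Y => Y :\: Z)} ->
  Dd d S <= Dd (d - #|Z|) [set Y :\: Z | Y in S].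
Proof.
move=> S0 injS.
have rhoE : rho (d - #|Z|) [set Y :\: Z | Y in S]
            = rho d S - (\sum_(Y in S) #|Z :\: Y|)%N%:Z.
  rewrite /rho big_imset //= -natz natr_sum -sumrB.
  by apply: eq_bigr => Y _; rewrite codim_setD natz.
have capE : bigcapT [set Y :\: Z | Y in S] = bigcapT S :\: Z.
  by rewrite /bigcapT big_imset //= bigcapT_setD.
have cupE : Z :\: bigcapT S = \bigcup_(Y in S) (Z :\: Y).
  apply/setP=> x; rewrite inE; apply/andP/bigcupP => [[/bigcapP xS xZ]|[Y YS]].
    have [/forall_inP|/forall_inPn[Y YS xY]] := boolP [forall Y in S, x \in Y].
      by move=> h; case: xS => Y YS; apply: h.
    by exists Y; rewrite // inE xY.
  by rewrite inE => /andP[xY xZ]; split => //; apply: contra xY => /bigcapP; apply.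
have := card_bigcup_leq_sum S (fun Y => Z :\: Y); rewrite -cupE.
rewrite /Dd rhoE capE codim_setD.
set a := #|Z :\: bigcapT S|; set b := (\sum_(Y in S) _)%N; lia.
Qed.

Lemma inL_setD U :
  inL d U -> (forall Y, Y \in U -> (#|Y :\: Z| <= d - #|Z|)%N) ->
  inL (d - #|Z|) [set Y :\: Z | Y in U].
Proof.
move=> LU hU; apply/andP; split; last first.
  by apply/forall_inP=> w /imsetP[Y YU ->]; apply: hU.
apply/forallP=> W; apply/implyP=> /andP[sWU W1].
pose lift w := odflt set0 [pick Y in U | Y :\: Z == w].
have liftP w : w \in W -> lift w \in U /\ lift w :\: Z = w.
  move=> /(subsetP sWU) /imsetP[Y YU ->]; rewrite /lift.
  case: pickP => [Y' /andP[? /eqP] //|none].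
  by have := none Y; rewrite YU eqxx.
pose S := lift @: W.
have WE : [set Y :\: Z | Y in S] = W.
  apply/setP=> w; apply/imsetP/idP => [[_ /imsetP[w' w'W ->] ->]|wW].
    by have [_ ->] := liftP w' w'W.
  by exists (lift w); [apply: imset_f | have [_ ->] := liftP w wW].
have injS : {in S &, injective (fun Y => Y :\: Z)}.
  move=> _ _ /imsetP[w1 w1W ->] /imsetP[w2 w2W ->] /=.
  by have [_ ->] := liftP w1 w1W; have [_ ->] := liftP w2 w2W => ->.
have cardS : #|S| = #|W|.
  apply: card_in_imset => w1 w2 w1W w2W e.
  by have [_ <-] := liftP w1 w1W; have [_ <-] := liftP w2 w2W; rewrite e.
have sSU : S \subset U by apply/subsetP=> _ /imsetP[w wW ->]; have [] := liftP w wW.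
have S0 : S != set0 by rewrite -card_gt0 cardS ltnW.
rewrite -WE; apply: lt_le_trans (Dd_le_setD S0 injS).
by apply: inL_Dd LU sSU _; rewrite cardS.
Qed.

End Link.

(* In [L(n,d)] a family containing [set0] is [[set set0]], so this says that
   the join of [G] among families of subsets of [A] is the top element. *)
Definition joins_to_top n d (A : {set 'I_n}) (G : {set {set 'I_n}}) :=
  [forall U : {set {set 'I_n}},
     [&& inL d U, [forall Y in U, Y \subset A] & refines G U] ==> (set0 \in U)].

Section JoinsToTop.
Variables (n d : nat) (A : {set 'I_n}) (G : {set {set 'I_n}}).

Lemma joins_to_topP :
  reflect (forall U, inL d U -> [forall Y in U, Y \subset A] -> refines G U -> set0 \in U)
          (joins_to_top d A G).
Proof.
apply: (iffP forallP) => [h U LU AU rU|h U]; first by move: (h U); rewrite LU AU rU.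
by apply/implyP=> /and3P[]; apply: h.
Qed.

Lemma joins_to_top_neq0 : joins_to_top d A G -> G != set0.
Proof.
move=> /joins_to_topP top; apply/negP=> /eqP G0.
suff : set0 \in (set0 : {set {set 'I_n}}) by rewrite inE.
apply: top; rewrite ?inL_set0 ?G0 ?refines_refl //.
by apply/forall_inP=> Y; rewrite inE.
Qed.

End JoinsToTop.

Lemma link_top_cover n d (Z : {set 'I_n}) (G U : {set {set 'I_n}}) :
  (forall X, X \in G -> Z \subset X /\ (#|X| <= d)%N) ->
  joins_to_top (d - #|Z|) (~: Z) [set X :\: Z | X in G] ->
  inL d U -> refines G U -> exists2 Y, Y \in U & Y \subset Z.
Proof.
move=> hG top LU rGU.
have /set0Pn[_ /imsetP[X0 X0G _]] := joins_to_top_neq0 top.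
have Zd : (#|Z| <= d)%N.
  by have [sZX X0d] := hG X0 X0G; apply: leq_trans (subset_leq_card sZX) X0d.
pose UG := [set Y in U | [exists X in G, Y \subset X]].
suff : set0 \in [set Y :\: Z | Y in UG].
  case/imsetP=> Y; rewrite inE => /andP[YU _] /esym/eqP; rewrite setD_eq0.
  by exists Y.
apply: (joins_to_topP _ _ _ top).
- apply: inL_setD => //; first by apply: inL_subset LU _; apply/subsetP=> Y /setIdP[].
  move=> Y; rewrite inE => /andP[_ /exists_inP[X XG sYX]].
  have [sZX Xd] := hG X XG.
  by apply: leq_trans (subset_leq_card (setSD Z sYX)) _; rewrite cardsDS // leq_sub2r.
- by apply/forall_inP=> _ /imsetP[Y _ ->]; apply: subsetDr.
apply/forall_inP=> _ /imsetP[X XG ->].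
have /exists_inP[Y YU sYX] := forall_inP rGU X XG.
apply/exists_inP; exists (Y :\: Z); last exact: setSD.
by apply: imset_f; rewrite inE YU; apply/exists_inP; exists X.
Qed.

(** * The join of hyperplanes *)

Definition link n (H : {set {set 'I_n}}) (Z : {set 'I_n}) : {set {set 'I_n}} :=
  [set X :\: Z | X in [set X in H | Z \subset X]].

Section Join.
Variables n d : nat.
Implicit Types (X Y Z : {set 'I_n}) (H T U V W : {set {set 'I_n}}).

Lemma is_join_refines H T :
  (forall X, X \in H -> (#|X| <= d)%N) ->
  is_join d [set [set X] | X in H] T <->
  [/\ inL d T, refines H T & forall U, inL d U -> refines H U -> refines T U].
Proof.
move=> Hd.
have uppers U : inL d U ->
    [forall V in [set [set X] | X in H], leL d V U] = refines H U.
  move=> LU; rewrite -refines_imset1; apply: eq_forallb_in => _ /imsetP[X XH ->].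
  by rewrite leL_refines // inL_set1 // Hd.
rewrite /is_join; split => [/and3P[LT hT /forallP least]|[LT rHT least]].
  split => //; first by rewrite -uppers.
  by move=> U LU rHU; move: (least U); rewrite LU uppers // rHU leL_refines.
apply/and3P; split; rewrite ?uppers //.
apply/forallP=> U; apply/implyP=> /andP[LU]; rewrite uppers // leL_refines //.
exact: least.
Qed.

Lemma setUDK Y Z : Y \subset ~: Z -> (Y :|: Z) :\: Z = Y.
Proof. by rewrite -disjoints_subset setDUl setDv setU0 => /setDidPl. Qed.

Lemma card_setU_compl Y Z : Y \subset ~: Z -> #|Y :|: Z| = (#|Y| + #|Z|)%N.
Proof. by rewrite -disjoints_subset => /disjoint_setI0 YZ; rewrite cardsU YZ cards0 subn0. Qed.

Lemma card_setU_compl_le Y Z :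
  (#|Z| <= d)%N -> Y \subset ~: Z -> (#|Y| <= d - #|Z|)%N -> (#|Y :|: Z| <= d)%N.
Proof. by move=> Zd /card_setU_compl ->; rewrite addnC -leq_subRL. Qed.

Lemma rho_lift Z W :
  (#|Z| <= d)%N -> [forall Y in W, Y \subset ~: Z] ->
  rho d [set Y :|: Z | Y in W] = rho (d - #|Z|) W.
Proof.
move=> Zd /forall_inP WZ; rewrite /rho big_imset /=.
  apply: eq_bigr => Y YW; rewrite /codim card_setU_compl ?WZ //.
  by move: Zd; set z := #|Z|; set y := #|Y|; lia.
by move=> Y1 Y2 Y1W Y2W e; rewrite -(setUDK (WZ _ Y1W)) e setUDK ?WZ.
Qed.

(* [rho (d - |Z|) W <= d - |Z| < codim d Z]: the lifts of [W] cost less than [Z]. *)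
Lemma rho_replace_lt T Z W :
  inL d T -> Z \in T -> inL (d - #|Z|) W -> [forall Y in W, Y \subset ~: Z] ->
  set0 \notin W -> rho d ((T :\ Z) :|: [set Y :|: Z | Y in W]) < rho d T.
Proof.
move=> LT ZT LW WZ W0; have Zd := inL_card LT ZT.
have liftd : [forall X in [set Y :|: Z | Y in W], (#|X| <= d)%N].
  apply/forall_inP=> _ /imsetP[Y YW ->].
  by rewrite card_setU_compl_le ?(forall_inP WZ) ?(inL_card LW).
apply: le_lt_trans (rho_setU _ liftd) _.
rewrite rho_lift // (rho_setID d (_ : [set Z] \subset T)) ?sub1set // rho_set1.
have := rho_le_d LW W0; rewrite /codim; lia.
Qed.

Lemma join_link_top H T Z :
  (forall X, X \in H -> (#|X| <= d)%N) -> is_join d [set [set X] | X in H] T ->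
  Z \in T -> joins_to_top (d - #|Z|) (~: Z) (link H Z).
Proof.
move=> Hd /(is_join_refines _ Hd)[LT rHT least] ZT.
apply/joins_to_topP=> W LW WZ rW; apply: contraT => W0.
pose V := (T :\ Z) :|: [set Y :|: Z | Y in W].
have bV : bounded_in d setT V.
  apply/forall_inP=> X; rewrite subsetT andbT !inE => /orP[/andP[_ XT]|].
    exact: inL_card LT XT.
  case/imsetP=> Y YW ->.
  by rewrite card_setU_compl_le ?(forall_inP WZ) ?(inL_card LW) ?(inL_card LT).
have rHV : refines H V.
  apply/forall_inP=> X XH.
  have /exists_inP[Y YT sYX] := forall_inP rHT X XH.
  have [YZ|nYZ] := eqVneq Y Z; last first.
    by apply/exists_inP; exists Y; rewrite // !inE nYZ YT.
  have : X :\: Z \in link H Z by apply: imset_f; rewrite inE XH -YZ sYX.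
  case/(forall_inP rW)/exists_inP=> Y' Y'W sY'X.
  apply/exists_inP; exists (Y' :|: Z); first by apply/setUP; right; apply: imset_f.
  by rewrite subUset -YZ sYX andbT (subset_trans sY'X) ?subsetDl.
have [V' [LV' _ rVV' rhoV']] := lattice_coarsening bV.
have rhoT := rho_refines LT (inL_cards LV') (least V' LV' (refines_trans rHV rVV')).
have := rho_replace_lt LT ZT LW WZ W0.
by rewrite -/V ltNge (le_trans rhoT rhoV').
Qed.

Lemma is_join_link H T :
  (forall X, X \in H -> (#|X| <= d)%N) -> inL d T ->
  is_join d [set [set X] | X in H] T <->
  refines H T /\ (forall Z, Z \in T -> joins_to_top (d - #|Z|) (~: Z) (link H Z)).
Proof.
move=> Hd LT; split=> [J|[rHT top]].
  by split=> [|Z]; [case/(is_join_refines _ Hd): J | exact: join_link_top].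
apply/(is_join_refines _ Hd); split => // U LU rHU.
apply/forall_inP=> Z ZT.
have above X : X \in [set X in H | Z \subset X] -> Z \subset X /\ (#|X| <= d)%N.
  by rewrite inE => /andP[XH ->]; split => //; apply: Hd.
have rGU : refines [set X in H | Z \subset X] U.
  by apply/forall_inP=> X; rewrite inE => /andP[XH _]; apply: (forall_inP rHU).
have [Y YU sYZ] := link_top_cover above (top Z ZT) LU rGU.
by apply/exists_inP; exists Y.
Qed.

End Join.

Section Counting.
Variables n d : nat.
Implicit Types (A X Y Z : {set 'I_n}) (G T : {set {set 'I_n}}).

(* A coarsening of [G] in [L(n,d)] contains the empty set, which has codimension
   [d + 1], while [rho] of the [d]-sets of [G] is [|G|]. *)
Lemma joins_to_top_card A G :
  (forall X, X \in G -> #|X| = d) -> (forall X, X \in G -> X \subset A) ->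
  joins_to_top d A G -> (d < #|G|)%N.
Proof.
move=> Gd GA /joins_to_topP top.
have bG : bounded_in d A G by apply/forall_inP=> X XG; rewrite Gd // leqnn GA.
have [V [LV bV rGV rhoV]] := lattice_coarsening bG.
have AV : [forall Y in V, Y \subset A] by apply/forall_inP=> Y /(forall_inP bV)/andP[].
have := codim_le_rho (inL_cards LV) (top V LV AV rGV).
have rhoG : rho d G = #|G|%:Z.
  rewrite /rho (eq_bigr (fun _ => 1)) ?sumr_const ?natz // => X /Gd.
  by rewrite /codim => ->; lia.
by move: rhoV; rewrite rhoG /codim cards0; lia.
Qed.

Lemma inL_member_unique T Z1 Z2 X :
  inL d T -> Z1 \in T -> Z2 \in T -> Z1 \subset X -> Z2 \subset X ->
  (#|X| <= d)%N -> Z1 = Z2.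
Proof.
move=> LT Z1T Z2T sZ1X sZ2X Xd; apply/eqP; apply: contraT => neqZ.
have sZT : [set Z1; Z2] \subset T by apply/subsetP=> Y /set2P[] ->.
have := inL_Dd LT sZT; rewrite cards2 neqZ /Dd => /(_ isT).
rewrite /bigcapT /rho !big_setU1 ?inE //= !big_set1.
have := cardsU Z1 Z2; have := subset_leq_card (subsetIl Z1 Z2).
have : (#|Z1 :|: Z2| <= #|X|)%N by apply: subset_leq_card; rewrite subUset sZ1X.
rewrite /codim; lia.
Qed.

End Counting.

(** * Relabelling the complement of a set *)

Section Transport.
Variables (m n d : nat) (g : 'I_m -> 'I_n).
Hypothesis g_inj : injective g.
Implicit Types (X Y : {set 'I_m}) (G S U : {set {set 'I_m}}).

Definition imfam U : {set {set 'I_n}} := [set g @: (Y : {set 'I_m}) | Y in U].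

Let imset_g_inj : injective (fun Y : {set 'I_m} => g @: Y).
Proof. exact: imset_inj. Qed.

Lemma imset_subset_inj X Y : (g @: Y \subset g @: X) = (Y \subset X).
Proof.
apply/idP/idP => [sYX|]; last exact: imsetS.
by apply/subsetP=> y yY; rewrite -(mem_imset _ _ g_inj) (subsetP sYX) ?imset_f.
Qed.

Lemma card_imfam U : #|imfam U| = #|U|.
Proof. exact: card_imset. Qed.

Lemma bigcapT_imfam S : S != set0 -> bigcapT (imfam S) = g @: bigcapT S.
Proof.
case/set0Pn=> Y0 Y0S; rewrite /bigcapT big_imset /=; last by move=> ? ? _ _; apply: imset_g_inj.
apply/setP=> x; apply/bigcapP/imsetP => [gS|[y /bigcapP yS ->] Y YS]; last first.
  by apply: imset_f; apply: yS.
have /imsetP[y y0 xE] := gS _ Y0S; exists y => //.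
apply/bigcapP=> Y YS; have /imsetP[y' y'Y xE'] := gS _ YS.
by rewrite (g_inj (etrans (esym xE) xE')).
Qed.

Lemma Dd_imfam S : S != set0 -> Dd d (imfam S) = Dd d S.
Proof.
move=> S0; rewrite /Dd bigcapT_imfam // /codim card_imset //; congr (_ - _).
rewrite /rho big_imset /=; last by move=> ? ? _ _; apply: imset_g_inj.
by apply: eq_bigr => Y _; rewrite /codim card_imset.
Qed.

Lemma inL_imfam U : inL d (imfam U) = inL d U.
Proof.
rewrite /inL; congr andb; last first.
  apply/forall_inP/forall_inP => Ud Y.
    by move=> YU; rewrite -(card_imset _ g_inj) Ud ?imset_f.
  by case/imsetP=> X XU ->; rewrite card_imset // Ud.
apply/forallP/forallP => [LU S|LU W]; apply/implyP => /andP[sSU S1].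
  have := LU (imfam S); rewrite card_imfam S1 andbT imsetS //= Dd_imfam //.
  by rewrite -card_gt0 ltnW.
pose S := [set Y in U | g @: Y \in W].
have SE : imfam S = W.
  apply/setP=> X; apply/imsetP/idP => [[Y /setIdP[_ ?] ->] //|XW].
  have /imsetP[Y YU XE] := subsetP sSU X XW.
  by exists Y => //; rewrite inE YU -XE.
have := LU S; rewrite -card_imfam SE S1 andbT.
have -> : S \subset U by apply/subsetP=> Y /setIdP[].
have S0 : S != set0 by rewrite -card_gt0 -card_imfam SE ltnW.
by rewrite -(Dd_imfam S0) SE.
Qed.

Lemma refines_imfam G U : refines (imfam G) (imfam U) = refines G U.
Proof.
apply/forall_inP/forall_inP => [rGU X XG|rGU _ /imsetP[X XG ->]].
  have /exists_inP[_ /imsetP[Y YU ->]] := rGU _ (imset_f _ XG).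
  by rewrite imset_subset_inj => sYX; apply/exists_inP; exists Y.
have /exists_inP[Y YU sYX] := rGU X XG.
by apply/exists_inP; exists (g @: Y); rewrite ?imset_f ?imset_subset_inj.
Qed.

Lemma set0_in_imfam U : (set0 \in imfam U) = (set0 \in U).
Proof. by rewrite -(imset0 g) (mem_imset _ _ imset_g_inj). Qed.

Lemma preimset_imfam (U : {set {set 'I_n}}) :
  [forall X in U, X \subset g @: setT] -> imfam [set g @^-1: (X : {set 'I_n}) | X in U] = U.
Proof.
move=> /forall_inP Ug; rewrite /imfam -imset_comp -[RHS]imset_id.
apply: eq_in_imset => X XU /=; apply/setP=> x; apply/imsetP/idP => [[y]|xX].
  by rewrite inE => ? ->.
have /imsetP[y _ xE] := subsetP (Ug X XU) x xX.
by exists y; rewrite // inE -xE.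
Qed.

Lemma joins_to_top_imfam G :
  joins_to_top d (g @: setT) (imfam G) = joins_to_top d setT G.
Proof.
apply/joins_to_topP/joins_to_topP => top U LU AU rGU.
  rewrite -set0_in_imfam top ?inL_imfam ?refines_imfam //.
  by apply/forall_inP=> _ /imsetP[Y _ ->]; apply: imsetS; apply: subsetT.
rewrite -(preimset_imfam AU) set0_in_imfam.
apply: top; last by rewrite -refines_imfam preimset_imfam.
  by rewrite -inL_imfam preimset_imfam.
by apply/forall_inP=> Y _; apply: subsetT.
Qed.

End Transport.

(** * Counting the pieces above a member *)

Definition dsets_above n d (Z : {set 'I_n}) :=
  [set X : {set 'I_n} | (#|X| == d) && (Z \subset X)].

Definition link_tops n d (Z : {set 'I_n}) (f : nat) :=
  [set G : {set {set 'I_n}} |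
     [&& G \subset dsets_above d Z, #|G| == f & joins_to_top (d - #|Z|) (~: Z) (link G Z)]].

Section LinkTops.
Variables n d : nat.
Implicit Types (X Y Z : {set 'I_n}) (G : {set {set 'I_n}}).

Lemma link_above G Z : (forall X, X \in G -> Z \subset X) -> link G Z = [set X :\: Z | X in G].
Proof.
move=> GZ; rewrite /link; suff -> : [set X in G | Z \subset X] = G by [].
by apply/setP=> X; rewrite inE; apply/andb_idr/GZ.
Qed.

Lemma setD_inj_above G Z :
  (forall X, X \in G -> Z \subset X) -> {in G &, injective (fun X => X :\: Z)}.
Proof.
move=> GZ X1 X2 /GZ sZX1 /GZ sZX2 e; apply/setP=> x.
have [xZ|xZ] := boolP (x \in Z); first by rewrite (subsetP sZX1) ?(subsetP sZX2).
by have := congr1 (fun A : {set 'I_n} => x \in A) e; rewrite /= !inE xZ.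
Qed.

Lemma link_tops_above G Z f : G \in link_tops d Z f ->
  [/\ forall X, X \in G -> #|X| = d /\ Z \subset X, #|G| = f
    & joins_to_top (d - #|Z|) (~: Z) [set X :\: Z | X in G]].
Proof.
rewrite inE => /and3P[/subsetP sG /eqP Gf top].
have GZ X : X \in G -> #|X| = d /\ Z \subset X.
  by move/sG; rewrite inE => /andP[/eqP].
by split=> //; rewrite -link_above // => X /GZ[].
Qed.

Lemma link_tops_lower G Z f : G \in link_tops d Z f -> (d - #|Z| < f)%N.
Proof.
case/link_tops_above=> GZ <- top.
rewrite -(card_in_imset (setD_inj_above (fun X XG => (GZ X XG).2))).
apply: joins_to_top_card top => _ /imsetP[X /GZ[Xd sZX] ->].
  by rewrite cardsDS // Xd.
exact: subsetDr.
Qed.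

Lemma card_link_tops_full Z f : #|Z| = d -> #|link_tops d Z f| = (f == 1)%N.
Proof.
move=> Zd.
have aboveZ : dsets_above d Z = [set Z].
  apply/setP=> X; rewrite !inE; apply/andP/eqP => [[/eqP Xd sZX]|->]; last by rewrite Zd.
  by apply/eqP; rewrite eq_sym eqEcard sZX Xd Zd /=.
have [f1|f1] := eqVneq f 1%N; last first.
  apply/eqP; rewrite /= cards_eq0; apply/set0Pn=> -[G GT].
  have := link_tops_lower GT; rewrite Zd subnn.
  move: GT; rewrite inE aboveZ => /and3P[/subset_leq_card + /eqP Gf _].
  by rewrite cards1 Gf; move: f1; case: f {Gf} => [|[|]].
suff -> : link_tops d Z f = [set [set Z]] by rewrite cards1.
apply/setP=> G; rewrite !inE aboveZ f1; apply/and3P/eqP => [[sG /eqP G1 _]|->].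
  by apply/eqP; rewrite eqEcard sG cards1 G1.
split; rewrite ?cards1 //; apply/joins_to_topP => U _ _ rU.
have : set0 \in link [set Z] Z by apply/imsetP; exists Z; rewrite ?setDv // !inE eqxx subxx.
case/(forall_inP rU)/exists_inP=> Y YU; rewrite subset0 => /eqP Y0.
by rewrite -Y0.
Qed.

End LinkTops.

Lemma is_join_top n d (G : {set {set 'I_n}}) :
  (forall X, X \in G -> (#|X| <= d)%N) ->
  is_join d [set [set X] | X in G] [set set0] <-> joins_to_top d setT G.
Proof.
move=> Gd; have linkG : link G set0 = G.
  by rewrite link_above ?(eq_imset _ (@setD0 _)) ?imset_id // => X; rewrite sub0set.
rewrite is_join_link //; last by rewrite inL_set1 ?cards0.
split=> [[_ top]|top]; first by have := top set0; rewrite set11 cards0 subn0 setC0 linkG; apply.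
split=> [|Z /set1P ->]; last by rewrite cards0 subn0 setC0 linkG.
by apply/forall_inP=> X _; apply/exists_inP; exists set0; rewrite ?set11 ?sub0set.
Qed.

Lemma exists_compl_enum n (Z : {set 'I_n}) :
  exists2 g : 'I_(n - #|Z|) -> 'I_n, injective g & g @: setT = ~: Z.
Proof.
have cardC : #|~: Z| = (n - #|Z|)%N by have := cardsC Z; rewrite card_ord; lia.
exists (fun i => enum_val (cast_ord (esym cardC) i)).
  by move=> i j /enum_val_inj /cast_ord_inj.
apply/setP=> x; apply/imsetP/idP => [[i _ ->]|xZ]; first exact: enum_valP.
by exists (cast_ord cardC (enum_rank_in xZ x)); rewrite ?cast_ordK ?enum_rankK_in.
Qed.

Section Lift.
Variables (n d : nat) (Z : {set 'I_n}) (g : 'I_(n - #|Z|) -> 'I_n).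
Hypotheses (g_inj : injective g) (g_im : g @: setT = ~: Z).
Implicit Types (Y : {set 'I_(n - #|Z|)}) (W : {set {set 'I_(n - #|Z|)}}) (G : {set {set 'I_n}}).

Definition lift_fam W : {set {set 'I_n}} := [set g @: (Y : {set 'I_(n - #|Z|)}) :|: Z | Y in W].

Lemma imset_subset_compl Y : g @: Y \subset ~: Z.
Proof. by rewrite -g_im imsetS ?subsetT. Qed.

Lemma lift_set_inj : injective (fun Y => g @: Y :|: Z).
Proof.
move=> Y1 Y2 e; apply: (imset_inj g_inj).
by rewrite -(setUDK (imset_subset_compl Y1)) -(setUDK (imset_subset_compl Y2)) /= e.
Qed.

Lemma link_lift_fam W : link (lift_fam W) Z = imfam g W.
Proof.
rewrite link_above; last by move=> _ /imsetP[Y _ ->]; apply: subsetUr.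
by rewrite -imset_comp; apply: eq_imset => Y /=; rewrite setUDK ?imset_subset_compl.
Qed.

Lemma lift_fam_inj : injective lift_fam.
Proof.
move=> W1 W2 /(congr1 (fun G => link G Z)); rewrite !link_lift_fam.
exact: (imset_inj (imset_inj g_inj)).
Qed.

Lemma lift_fam_in_link_tops W f :
  (forall Y, Y \in W -> #|Y| = (d - #|Z|)%N) -> (#|Z| <= d)%N ->
  (lift_fam W \in link_tops d Z f) = (#|W| == f) && joins_to_top (d - #|Z|) setT W.
Proof.
move=> Wd Zd; rewrite inE card_imset; last exact: lift_set_inj.
rewrite link_lift_fam -g_im joins_to_top_imfam // andbA; congr (_ && _).
apply/andb_idl=> _; apply/subsetP=> _ /imsetP[Y YW ->].
rewrite inE subsetUr andbT card_setU_compl ?imset_subset_compl //.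
by rewrite card_imset // Wd // subnK.
Qed.

Lemma link_tops_lift G f : (#|Z| <= d)%N -> G \in link_tops d Z f ->
  exists2 W : {set {set 'I_(n - #|Z|)}}, (forall Y, Y \in W -> #|Y| = (d - #|Z|)%N) & G = lift_fam W.
Proof.
move=> Zd /link_tops_above[GZ _ _].
have g_pre X : X \in G -> g @: (g @^-1: (X :\: Z)) = X :\: Z.
  move=> _; apply/setP=> x; apply/imsetP/idP => [[y]|]; first by rewrite inE => ? ->.
  move=> xXZ; have : x \in g @: setT by rewrite g_im inE; case/setDP: xXZ.
  by case/imsetP=> y _ xE; exists y; rewrite // inE -xE.
exists [set g @^-1: (X :\: Z) | X in G].
  move=> _ /imsetP[X XG ->]; rewrite -(card_imset _ g_inj) g_pre //.
  by have [Xd sZX] := GZ X XG; rewrite cardsDS // Xd.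
rewrite /lift_fam -imset_comp -[LHS]imset_id; apply: eq_in_imset => X XG /=.
rewrite g_pre //; apply/setP=> x; rewrite !inE.
by case: (boolP (x \in Z)) => [/(subsetP (GZ X XG).2) ->|]; rewrite ?orbT ?orbF.
Qed.

End Lift.

Lemma card_link_tops_kappa n d (Z : {set 'I_n}) f : (#|Z| < d)%N ->
  #|link_tops d Z f| = kappa (d - #|Z|) f [set (set0 : {set 'I_(n - #|Z|)})].
Proof.
move=> Zd; have [g g_inj g_im] := exists_compl_enum Z.
rewrite /kappa subn_eq0 leqNgt Zd /= -(card_imset _ (lift_fam_inj g_inj g_im)).
apply: eq_card => G; apply/idP/imsetP => [GT|[W + ->]].
  have [W Wd GE] := link_tops_lift g_inj g_im (ltnW Zd) GT; exists W => //.
  move: GT; rewrite GE lift_fam_in_link_tops ?(ltnW Zd) // inE => /andP[-> top] /=.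
  apply/andP; split; first by apply/forall_inP=> Y /Wd ->.
  by apply/is_join_top => // Y /Wd ->.
rewrite inE => /and3P[Wf /forall_inP/(_ _ _)/eqP Wd /is_join_top top].
by rewrite lift_fam_in_link_tops ?(ltnW Zd) // Wf top // => Y /Wd ->.
Qed.

(** * Decomposition along the members of T *)

Definition member n (T : {set {set 'I_n}}) (i : nat) : {set 'I_n} := nth set0 (enum T) i.

Section Decomposition.
Variables (n d : nat) (T : {set {set 'I_n}}).
Hypothesis LT : inL d T.
Local Notation l := (size (enum T)).
Local Notation above i := (dsets_above d (member T i)).
Implicit Types (X : {set 'I_n}) (H : {set {set 'I_n}}) (i j : 'I_l).

Lemma member_in i : member T i \in T.
Proof. by rewrite -mem_enum mem_nth. Qed.

Lemma member_onto Z : Z \in T -> exists i : 'I_l, member T i = Z.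
Proof.
rewrite -mem_enum => ZT; exists (Ordinal (etrans (index_mem Z _) ZT)).
exact: nth_index.
Qed.

Lemma above_unique X i j : X \in above i -> X \in above j -> i = j.
Proof.
rewrite !inE => /andP[/eqP Xd sXi] /andP[_ sXj]; apply/val_inj/eqP.
rewrite -(nth_uniq set0 (ltn_ord i) (ltn_ord j) (enum_uniq _)); apply/eqP.
by apply: inL_member_unique LT (member_in i) (member_in j) sXi sXj _; rewrite Xd.
Qed.

Lemma card_above_partition H :
  H \subset \bigcup_(i < l) above i -> #|H| = (\sum_(i < l) #|H :&: above i|)%N.
Proof.
move=> /subsetP Hcov.
have one X : X \in H -> (\sum_(i < l) (X \in above i) = 1)%N.
  move=> /Hcov /bigcupP[i _ Xi]; rewrite (bigD1 i) //= Xi big1 // => j ji.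
  by apply/eqP; rewrite eqb0; apply: contra ji => Xj; rewrite (above_unique Xj Xi).
rewrite -sum1_card (eq_bigr _ (fun X XH => esym (one X XH))) exchange_big /=.
apply: eq_bigr => i _; rewrite -sum1_card big_mkcond [RHS]big_mkcond /=.
by apply: eq_bigr => X _; rewrite in_setI; case: (X \in H); case: (X \in above i).
Qed.

Lemma bigcup_above_setI (F : 'I_l -> {set {set 'I_n}}) i :
  (forall j, F j \subset above j) -> (\bigcup_j F j) :&: above i = F i.
Proof.
move=> FA; apply/setP=> X; rewrite inE; apply/andP/idP => [[/bigcupP[j _ Xj] Xi]|Xi].
  by rewrite (above_unique Xi (subsetP (FA j) X Xj)).
by split; [apply/bigcupP; exists i | apply: (subsetP (FA i))].
Qed.

Lemma link_setI_above H i :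
  (forall X, X \in H -> #|X| = d) -> link H (member T i) = link (H :&: above i) (member T i).
Proof.
move=> Hd; rewrite /link; suff -> : [set X in H :&: above i | member T i \subset X]
  = [set X in H | member T i \subset X] by [].
by apply/setP=> X; rewrite !inE -andbA; case XH: (X \in H); rewrite /= ?Hd ?eqxx ?andbb.
Qed.

Lemma is_join_above H :
  (forall X, X \in H -> #|X| = d) ->
  is_join d [set [set X] | X in H] T <->
  H \subset \bigcup_(i < l) above i /\ (forall i, H :&: above i \in link_tops d (member T i) #|H :&: above i|).
Proof.
move=> Hd; rewrite is_join_link // => [|X /Hd ->//].
have refinesE : refines H T = (H \subset \bigcup_(i < l) above i).
  apply/forall_inP/subsetP => [rHT X XH|Hcov X XH].
    have /exists_inP[Z ZT sZX] := rHT X XH; have [i iZ] := member_onto ZT.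
    by apply/bigcupP; exists i; rewrite // inE Hd // eqxx iZ.
  have /bigcupP[i _] := Hcov X XH; rewrite inE => /andP[_ sX].
  by apply/exists_inP; exists (member T i); rewrite ?member_in.
rewrite refinesE; split=> -[Hcov top]; split=> //.
  by move=> i; rewrite inE subsetIr eqxx -link_setI_above // top ?member_in.
move=> Z /member_onto[i <-].
have := top i; rewrite inE => /and3P[_ _].
by rewrite [link H _]link_setI_above.
Qed.

Definition decompositions m :=
  [set F : {ffun 'I_l -> {set {set 'I_n}}} |
     [forall i, F i \in link_tops d (member T i) #|F i|] && (\sum_(i < l) #|F i| == m)%N].

Lemma bigcup_setI_above H : H \subset \bigcup_(i < l) above i -> \bigcup_(i < l) (H :&: above i) = H.
Proof.
move=> /subsetP Hcov; apply/setP=> X; apply/bigcupP/idP => [[i _ /setIP[] //]|XH].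
by have /bigcupP[i _ Xi] := Hcov X XH; exists i => //; rewrite inE XH.
Qed.

Lemma card_joins_decompositions m :
  #|[set H : {set {set 'I_n}} | [&& #|H| == m, [forall X in H, #|X| == d]
        & is_join d [set [set X] | X in H] T]]| = #|decompositions m|.
Proof.
set joins := [set H | _].
pose restrict H : {ffun 'I_l -> {set {set 'I_n}}} := [ffun i : 'I_l => H :&: above i].
have joinsP H : H \in joins -> [/\ #|H| = m, forall X, X \in H -> #|X| = d,
    H \subset \bigcup_(i < l) above i
  & forall i, H :&: above i \in link_tops d (member T i) #|H :&: above i|].
  rewrite inE => /and3P[/eqP Hm /forall_inP Hd]; have Hd' X : X \in H -> #|X| = d by move=> XH; apply/eqP/Hd.
  by case/(is_join_above Hd') => Hcov top; split.
have restrict_inj : {in joins &, injective restrict}.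
  move=> H1 H2 /joinsP[_ _ cov1 _] /joinsP[_ _ cov2 _] e.
  rewrite -(bigcup_setI_above cov1) -(bigcup_setI_above cov2).
  by apply: eq_bigr => i _; rewrite -!(ffunE (fun i => _ :&: above i)) -/(restrict _) e.
rewrite -(card_in_imset restrict_inj); congr #|pred_of_set _|.
apply/setP=> F; apply/imsetP/idP => [[H /joinsP[Hm Hd Hcov top] ->]|].
  rewrite inE; apply/andP; split; first by apply/forallP=> i; rewrite ffunE top.
  by rewrite -Hm (card_above_partition Hcov); under eq_bigr do rewrite ffunE.
rewrite inE => /andP[/forallP Ftop /eqP Fm].
have FA i : F i \subset above i by have := Ftop i; rewrite inE => /and3P[].
have FE i : (\bigcup_(j < l) F j) :&: above i = F i by apply: bigcup_above_setI.
have Hcov : \bigcup_(j < l) F j \subset \bigcup_(i < l) above i.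
  by apply/bigcupsP=> i _; rewrite (subset_trans (FA i)) // (bigcup_sup i).
have Hd X : X \in \bigcup_(j < l) F j -> #|X| = d.
  by case/bigcupP=> j _ /(subsetP (FA j)); rewrite inE => /andP[/eqP].
exists (\bigcup_(j < l) F j); last by apply/ffunP=> i; rewrite ffunE FE.
rewrite inE (card_above_partition Hcov); apply/and3P; split.
- by under eq_bigr do rewrite FE; rewrite Fm.
- by apply/forall_inP=> X /Hd ->.
by apply/(is_join_above Hd); split=> // i; rewrite FE Ftop.
Qed.

Lemma card_decompositions m :
  #|decompositions m| =
  (\sum_(f : {ffun 'I_l -> 'I_m.+1} | \sum_(i < l) (f i : nat) == m)
      \prod_(i < l) #|link_tops d (member T i) (f i)|)%N.
Proof.
pose sizes (F : {ffun 'I_l -> {set {set 'I_n}}}) : {ffun 'I_l -> 'I_m.+1} :=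
  [ffun i => inord #|F i|].
have sizesE (F : {ffun 'I_l -> {set {set 'I_n}}}) (i : 'I_l) : (\sum_(j < l) #|F j| = m)%N -> sizes F i = #|F i| :> nat.
  by move=> Fm; rewrite ffunE inordK // ltnS -Fm (bigD1 i) //= leq_addr.
rewrite -sum1_card (partition_big sizes (fun f => \sum_(i < l) (f i : nat) == m)%N); last first.
  move=> F /[!inE] /andP[_ /eqP Fm]; apply/eqP; rewrite -[RHS]Fm.
  by apply: eq_bigr => i _; rewrite sizesE.
apply: eq_bigr => f /eqP fm; rewrite sum1dep_card.
rewrite -(cardsXn (fun i => link_tops d (member T i) (f i))); apply: eq_card => F.
rewrite !inE; apply/andP/forallP => [[/andP[/forallP Ftop /eqP Fm] /eqP <-] i|Ff].
  by rewrite /= sizesE // Ftop.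
have Fi i : #|F i| = f i /\ F i \in link_tops d (member T i) #|F i|.
  by have := Ff i; rewrite inE => /and3P[_ /eqP Fi _]; rewrite Fi.
have Fm : (\sum_(i < l) #|F i| = m)%N by rewrite -fm; apply: eq_bigr => i _; case: (Fi i).
split; first by rewrite Fm eqxx andbT; apply/forallP=> i; case: (Fi i).
by apply/eqP/ffunP=> i; apply: ord_inj; rewrite sizesE //; case: (Fi i).
Qed.

End Decomposition.

Lemma card_link_tops n d (Z : {set 'I_n}) (f : nat) : (#|Z| <= d)%N ->
  #|link_tops d Z f| =
  (if [&& (0 < f)%N, codim d Z <= f%:Z & (codim d Z == 1) ==> (f == 1)%N]
   then kappa (d - #|Z|) f [set (set0 : {set 'I_(n - #|Z|)})] else 0%N).
Proof.
rewrite leq_eqVlt => /orP[/eqP Zd|Zd].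
  have -> : codim d Z = 1 by rewrite /codim Zd; lia.
  rewrite card_link_tops_full // /kappa Zd subnn eqxx /=.
  by case: f => [|[|f]]; rewrite //= eqxx.
have -> : [&& (0 < f)%N, codim d Z <= f%:Z & (codim d Z == 1) ==> (f == 1)%N] = (d - #|Z| < f)%N.
  rewrite /codim; apply/and3P/idP => [[_ ? _]|?]; first lia.
  by split; [lia | lia | apply/implyP; lia].
case: ltnP => [_|fZ]; first exact: card_link_tops_kappa.
apply/eqP; rewrite cards_eq0; apply/set0Pn=> -[G /link_tops_lower].
by rewrite ltnNge fZ.
Qed.

Lemma prod_if_forall (I : finType) (P : pred I) (F : I -> nat) :
  (\prod_i (if P i then F i else 0) = if [forall i, P i] then \prod_i F i else 0)%N.
Proof.
case: ifP => [/forallP PI|/forallPn[i Pi]]; first by apply: eq_bigr => i _; rewrite PI.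
by rewrite (bigD1 i) //= (negbTE Pi) mul0n.
Qed.

Unset Implicit Arguments.
Theorem proposition4p8 (d n : nat) (T : {set {set 'I_n}}) (m : nat) :
  (d < n)%N -> inL d T -> T != [set set0] -> (0 < m)%N ->
  kappa d m T =
  (\sum_(f : {ffun 'I_(size (enum T)) -> 'I_m.+1} |
          [&& [forall i : 'I_(size (enum T)), (0 < f i)%N],
              [forall i : 'I_(size (enum T)), (codim d (nth set0 (enum T) i) <= (f i : nat)%:Z)%R],
              [forall i : 'I_(size (enum T)), (codim d (nth set0 (enum T) i) == 1%R) ==> (f i == 1%N :> nat)]
            & (\sum_(i < size (enum T)) (f i : nat) == m)%N])
     \prod_(i < size (enum T))
        kappa (d - #|nth set0 (enum T) i|) (f i)
              [set (set0 : {set 'I_(n - #|nth set0 (enum T) i|)})])%N.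
Proof.
move=> _ LT T1 _.
rewrite {1}/kappa (negbTE T1) andbF card_joins_decompositions // card_decompositions.
under eq_bigr => f _.
  rewrite (eq_bigr _ (fun i _ => card_link_tops _ (inL_card LT (member_in i)))) prod_if_forall.
  over.
rewrite -big_mkcondr /=; apply: eq_bigl => f.
apply/andP/and4P => [[fm /forallP Mf]|[/forallP f0 /forallP fc /forallP f1 fm]].
  by split=> //; apply/forallP=> i; case/and3P: (Mf i).
by split=> //; apply/forallP=> i; rewrite f0 fc f1.
Qed.
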